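(* Let $\mathcal{D}\subset\mathbb{R}^2$ be open and bounded, $\mathcal{K}=\{0,1,2\}$, $\boldsymbol{\phi}=(\phi_0,\phi_1,\phi_2)\in\mathcal{C}^\infty(\mathbb{R}^2,\mathbb{R}^3)$ with $\phi_0\equiv0$. Let $\hat x\in\mathcal{E}_{\mathcal{K}}(\boldsymbol{\phi})$ and assume $D\widehat{\boldsymbol{\phi}}_{\mathcal{K}}(\hat x)$ is invertible. Then for all $k\in\mathcal{K}$, $$\beta_k=\arccos\frac{\nabla(\phi_{[k+1]_3}-\phi_k)\cdot\nabla(\phi_k-\phi_{[k+2]_3})}{|\nabla(\phi_{[k+1]_3}-\phi_k)|\,|\nabla(\phi_k-\phi_{[k+2]_3})|},$$ with gradients evaluated at $\hat x$, where $[j]_3$ denotes $j$ modulo $3$.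
   Context: For $j\in\mathcal{K}$, $\Omega_j(\boldsymbol{\phi})=\operatorname{int}\{x\in\mathcal{D}\mid\phi_j(x)\le\phi_m(x)\ \forall m\ne j\}$; for $\mathcal{I}\subset\mathcal{K}$, $\mathcal{E}_{\mathcal{I}}(\boldsymbol{\phi})=\bigcap_{j\in\mathcal{I}}\partial\Omega_j(\boldsymbol{\phi})$; $\widehat{\boldsymbol{\phi}}_{\mathcal{K}}=(\phi_0-\phi_1,\phi_0-\phi_2)$. For $\mathcal{I}\in\{\{0,1\},\{1,2\},\{0,2\}\}$, $\mathbb{D}_{\mathcal{I}}$ denotes the half-tangent to the curve $\mathcal{E}_{\mathcal{I}}(\boldsymbol{\phi})$ at $\hat x$. In polar coordinates centered at $\hat x$ with angle $\vartheta\in[0,2\pi]$, $\vartheta=0$ along $\mathbb{D}_{\{0,2\}}$, let $\vartheta_0$ be the angle of $\mathbb{D}_{\{0,1\}}$ and $\vartheta_1$ that of $\mathbb{D}_{\{1,2\}}$, labels of $\phi_0,\phi_2$ being exchanged if necessary so that $\vartheta_0\le\vartheta_1$; then $\beta_0=\vartheta_0$, $\beta_1=\vartheta_1-\vartheta_0$, $\beta_2=2\pi-\vartheta_1$. *)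

From Stdlib Require Import Reals List.
From Coquelicot Require Import Coquelicot.
Open Scope R_scope.

Definition pt := (R * R)%type.

Definition dot (a b : pt) : R := fst a * fst b + snd a * snd b.
Definition cross (a b : pt) : R := fst a * snd b - snd a * fst b.
Definition vnorm (a : pt) : R := sqrt (dot a a).
Definition vsub (a b : pt) : pt := (fst a - fst b, snd a - snd b).
Definition vscale (c : R) (a : pt) : pt := (c * fst a, c * snd a).
Definition dist2 (a b : pt) : R := vnorm (vsub a b).

Definition interior (S : pt -> Prop) (x : pt) : Prop :=
  exists e, 0 < e /\ forall y, dist2 y x < e -> S y.
Definition closure (S : pt -> Prop) (x : pt) : Prop :=
  forall e, 0 < e -> exists y, S y /\ dist2 y x < e.
Definition boundary (S : pt -> Prop) (x : pt) : Prop :=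
  closure S x /\ ~ interior S x.
Definition is_open (S : pt -> Prop) : Prop := forall x, S x -> interior S x.
Definition is_bounded (S : pt -> Prop) : Prop :=
  exists M, forall x, S x -> vnorm x <= M.

Definition cont2 (f : pt -> R) : Prop :=
  forall x e, 0 < e -> exists d, 0 < d /\
    forall y, dist2 y x < d -> Rabs (f y - f x) < e.
Definition is_partial1 (f g : pt -> R) : Prop :=
  forall x y, derivable_pt_lim (fun t => f (t, y)) x (g (x, y)).
Definition is_partial2 (f g : pt -> R) : Prop :=
  forall x y, derivable_pt_lim (fun t => f (x, t)) y (g (x, y)).
Fixpoint Ck (n : nat) (f : pt -> R) : Prop :=
  match n with
  | O => cont2 f
  | S n => cont2 f /\ exists g1 g2, is_partial1 f g1 /\ is_partial2 f g2 /\
                                    Ck n g1 /\ Ck n g2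
  end.
Definition smooth (f : pt -> R) : Prop := forall n, Ck n f.

Definition grad (f : pt -> R) (x : pt) : pt :=
  (Derive (fun t => f (t, snd x)) (fst x), Derive (fun t => f (fst x, t)) (snd x)).

Definition phidiff (phi : nat -> pt -> R) (a b : nat) : pt -> R :=
  fun p => phi a p - phi b p.

Definition Omega (D : pt -> Prop) (phi : nat -> pt -> R) (j : nat) : pt -> Prop :=
  interior (fun x => D x /\ forall m, (m < 3)%nat -> m <> j -> phi j x <= phi m x).

Definition E (D : pt -> Prop) (phi : nat -> pt -> R) (I : list nat) : pt -> Prop :=
  fun x => forall j, In j I -> boundary (Omega D phi j) x.

Definition is_half_tangent (S : pt -> Prop) (x d : pt) : Prop :=
  vnorm d = 1 /\
  (forall e, 0 < e -> exists y, S y /\ 0 < dist2 y x < e) /\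
  (forall e, 0 < e -> exists del, 0 < del /\
     forall y, S y -> 0 < dist2 y x < del ->
       dist2 (vscale (/ dist2 y x) (vsub y x)) d < e).

Definition ccw_angle (a d : pt) (th : R) : Prop :=
  0 <= th < 2 * PI /\ cos th = dot a d /\ sin th = cross a d.

(** beta_k from the angles th0 (of D_{01}) and th1 (of D_{12}), both measured from
    D_{02}.  If th0 <= th1 this is the paper's definition verbatim; otherwise the
    paper exchanges the labels of phi_0 and phi_2, and we translate the resulting
    angles back to the original labels (beta_k = opening angle of Omega_k). *)
Definition beta (th0 th1 : R) (k : nat) : R :=
  if Rle_dec th0 th1 then
    match k with O => th0 | 1%nat => th1 - th0 | _ => 2 * PI - th1 end
  else
    match k with O => 2 * PI - th0 | 1%nat => th0 - th1 | _ => th1 end.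

Definition angle_formula (phi : nat -> pt -> R) (x : pt) (k : nat) : R :=
  let u := grad (phidiff phi ((k + 1) mod 3) k) x in
  let v := grad (phidiff phi k ((k + 2) mod 3)) x in
  acos (dot u v / (vnorm u * vnorm v)).

(* Near the junction all three phi_j are C^1 and coincide, so E_{ij} is, locally, the set
   where a := phi_j - phi_i vanishes and b := phi_k - phi_i is nonnegative.  Since the
   gradients of a and b are independent, the intermediate value theorem in the chart dual
   to them produces points of E_{ij} arbitrarily close to the junction, and strict
   differentiability forces every chord of E_{ij} from the junction to point, in the
   limit, along the unit normal to grad a on the side where b > 0.  The half-tangents are
   therefore explicit rotated gradients, and the opening angles follow by trigonometry:
   the sign of the cross product of the gradients only decides which of th0 <= th1 holds,
   and both cases give the same formula. *)

From Pilot Require Import Defs.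
From Stdlib Require Import Reals List Lra Psatz Lia.
From Coquelicot Require Import Coquelicot.
Open Scope R_scope.

Definition norm1 (v : pt) : R := Rabs (fst v) + Rabs (snd v).

Lemma vnorm_nonneg v : 0 <= vnorm v.
Proof. apply sqrt_pos. Qed.

Lemma vnorm_sqr v : vnorm v * vnorm v = dot v v.
Proof. apply sqrt_sqrt; unfold dot; nra. Qed.

Lemma vnorm_eq_1 v : dot v v = 1 -> vnorm v = 1.
Proof. intro H; unfold vnorm; rewrite H; apply sqrt_1. Qed.

Lemma Rabs_fst_le_vnorm v : Rabs (fst v) <= vnorm v.
Proof.
  pose proof (vnorm_nonneg v); pose proof (vnorm_sqr v); unfold dot in *.
  apply Rabs_le; split; nra.
Qed.

Lemma Rabs_snd_le_vnorm v : Rabs (snd v) <= vnorm v.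
Proof.
  pose proof (vnorm_nonneg v); pose proof (vnorm_sqr v); unfold dot in *.
  apply Rabs_le; split; nra.
Qed.

Lemma norm1_nonneg v : 0 <= norm1 v.
Proof. unfold norm1; pose proof (Rabs_pos (fst v)); pose proof (Rabs_pos (snd v)); lra. Qed.

Lemma vnorm_le_norm1 v : vnorm v <= norm1 v.
Proof.
  pose proof (vnorm_nonneg v); pose proof (vnorm_sqr v); unfold dot, norm1 in *.
  pose proof (Rabs_pos (fst v)); pose proof (Rabs_pos (snd v)).
  pose proof (Rsqr_abs (fst v)); pose proof (Rsqr_abs (snd v)); unfold Rsqr in *.
  nra.
Qed.

Lemma norm1_le_vnorm v : norm1 v <= 2 * vnorm v.
Proof. unfold norm1; pose proof (Rabs_fst_le_vnorm v); pose proof (Rabs_snd_le_vnorm v); lra. Qed.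

Lemma vnorm_pos v : v <> (0, 0) -> 0 < vnorm v.
Proof.
  intro Hv; destruct (vnorm_nonneg v) as [| H0]; auto.
  exfalso; apply Hv; pose proof (Rabs_fst_le_vnorm v); pose proof (Rabs_snd_le_vnorm v).
  destruct v as [v1 v2]; simpl in *; rewrite <- H0 in *.
  f_equal; apply Rabs_eq_0; pose proof (Rabs_pos v1); pose proof (Rabs_pos v2); lra.
Qed.

Lemma dist2_refl x : dist2 x x = 0.
Proof.
  unfold dist2, vsub, vnorm, dot; rewrite !Rminus_diag; simpl.
  rewrite Rmult_0_l, Rplus_0_l; apply sqrt_0.
Qed.

Lemma dist2_coords_lt x p r :
  Rabs (fst p - fst x) < r -> Rabs (snd p - snd x) < r -> dist2 p x < 2 * r.
Proof.
  intros; pose proof (vnorm_le_norm1 (vsub p x)).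
  unfold dist2, norm1, vsub in *; simpl in *; lra.
Qed.

Lemma Rabs_fst_sub_le_dist2 p x : Rabs (fst p - fst x) <= dist2 p x.
Proof. apply (Rabs_fst_le_vnorm (vsub p x)). Qed.

Lemma Rabs_snd_sub_le_dist2 p x : Rabs (snd p - snd x) <= dist2 p x.
Proof. apply (Rabs_snd_le_vnorm (vsub p x)). Qed.

Lemma eq_0_of_small r : (forall eps, 0 < eps -> Rabs r <= eps) -> r = 0.
Proof.
  intro H; destruct (Req_dec r 0) as [| Hr]; auto.
  pose proof (Rabs_pos_lt r Hr); specialize (H (Rabs r / 2)); lra.
Qed.

Lemma dist2_pos x y : y <> x -> 0 < dist2 y x.
Proof.
  intro Hyx; apply vnorm_pos; intro H0; apply Hyx.
  destruct x, y; unfold vsub in H0; simpl in H0; injection H0; intros; f_equal; lra.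
Qed.

Lemma cont2_sub f g : cont2 f -> cont2 g -> cont2 (fun p => f p - g p).
Proof.
  intros Hf Hg x e He.
  destruct (Hf x (e / 2)) as [d1 [Hd1 H1]]; [lra|].
  destruct (Hg x (e / 2)) as [d2 [Hd2 H2]]; [lra|].
  exists (Rmin d1 d2); split; [apply Rmin_glb_lt; auto|].
  intros y Hy; pose proof (Rmin_l d1 d2); pose proof (Rmin_r d1 d2).
  specialize (H1 y ltac:(lra)); specialize (H2 y ltac:(lra)).
  replace (f y - g y - (f x - g x)) with ((f y - f x) - (g y - g x)) by ring.
  eapply Rle_lt_trans; [apply Rabs_triang|]; rewrite Rabs_Ropp; lra.
Qed.

Lemma cont2_line f c1 c2 v1 v2 :
  cont2 f -> continuity (fun s => f (c1 + s * v1, c2 + s * v2)).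
Proof.
  intros Hf s0 eps Heps; destruct (Hf (c1 + s0 * v1, c2 + s0 * v2) eps Heps) as [d [Hd H]].
  set (K := Rabs v1 + Rabs v2 + 1).
  assert (HK : 1 <= K) by (unfold K; pose proof (Rabs_pos v1); pose proof (Rabs_pos v2); lra).
  exists (d / K); split; [apply Rdiv_lt_0_compat; lra|].
  intros s [_ Hs]; simpl in *; unfold R_dist in *; apply H.
  eapply Rle_lt_trans; [apply vnorm_le_norm1|]; unfold norm1, vsub; simpl.
  replace (c1 + s * v1 - (c1 + s0 * v1)) with ((s - s0) * v1) by ring.
  replace (c2 + s * v2 - (c2 + s0 * v2)) with ((s - s0) * v2) by ring.
  rewrite !Rabs_mult; pose proof (Rabs_pos (s - s0)).
  apply (Rmult_lt_compat_r K) in Hs; [|lra].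
  unfold Rdiv in Hs; rewrite Rmult_assoc, Rinv_l in Hs by lra; unfold K in Hs; nra.
Qed.

(** * Strict differentiability *)

Definition strictly_differentiable (f : pt -> R) (x l : pt) : Prop :=
  forall eps, 0 < eps -> exists r, 0 < r /\
    forall p q, dist2 p x < r -> dist2 q x < r ->
      Rabs (f q - f p - dot l (vsub q p)) <= eps * vnorm (vsub q p).

Lemma mvt_global (h dh : R -> R) a b :
  (forall t, derivable_pt_lim h t (dh t)) ->
  exists c, Rmin a b <= c <= Rmax a b /\ h b - h a = dh c * (b - a).
Proof.
  intro H; apply (MVT_gen h a b dh).
  - intros t _; apply is_derive_Reals, H.
  - intros t _; apply derivable_continuous_pt; exists (dh t); apply H.
Qed.

Lemma Rabs_between_lt a b c x r :
  Rmin a b <= c <= Rmax a b -> Rabs (a - x) < r -> Rabs (b - x) < r -> Rabs (c - x) < r.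
Proof.
  unfold Rmin, Rmax; destruct (Rle_dec a b); intros [] Ha Hb;
  apply Rabs_def2 in Ha; apply Rabs_def2 in Hb; apply Rabs_def1; lra.
Qed.

(* Mean value theorem along the two sides of the axis-parallel path p -> (p1, q2) -> q. *)
Lemma strictly_differentiable_of_partials f g1 g2 x :
  is_partial1 f g1 -> is_partial2 f g2 -> cont2 g1 -> cont2 g2 ->
  strictly_differentiable f x (g1 x, g2 x).
Proof.
  intros P1 P2 C1 C2 eps Heps.
  destruct (C1 x (eps / 2)) as [d1 [Hd1 H1]]; [lra|].
  destruct (C2 x (eps / 2)) as [d2 [Hd2 H2]]; [lra|].
  set (r := Rmin d1 d2 / 2).
  assert (Hr1 : 2 * r <= d1) by (unfold r; pose proof (Rmin_l d1 d2); lra).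
  assert (Hr2 : 2 * r <= d2) by (unfold r; pose proof (Rmin_r d1 d2); lra).
  exists r; split; [unfold r; assert (0 < Rmin d1 d2) by (apply Rmin_glb_lt; auto); lra|].
  intros [p1 p2] [q1 q2] Hp Hq.
  pose proof (Rabs_fst_sub_le_dist2 (p1, p2) x); pose proof (Rabs_snd_sub_le_dist2 (p1, p2) x).
  pose proof (Rabs_fst_sub_le_dist2 (q1, q2) x); pose proof (Rabs_snd_sub_le_dist2 (q1, q2) x).
  simpl in *.
  destruct (mvt_global (fun t => f (t, q2)) (fun t => g1 (t, q2)) p1 q1 (fun t => P1 t q2))
    as [c1 [Hc1 E1]].
  destruct (mvt_global (fun t => f (p1, t)) (fun t => g2 (p1, t)) p2 q2 (fun t => P2 p1 t))
    as [c2 [Hc2 E2]].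
  assert (G1 : Rabs (g1 (c1, q2) - g1 x) < eps / 2).
  { apply H1; eapply Rlt_le_trans; [apply dist2_coords_lt|apply Hr1]; simpl;
      [eapply Rabs_between_lt; eauto|]; lra. }
  assert (G2 : Rabs (g2 (p1, c2) - g2 x) < eps / 2).
  { apply H2; eapply Rlt_le_trans; [apply dist2_coords_lt|apply Hr2]; simpl;
      [|eapply Rabs_between_lt; eauto]; lra. }
  pose proof (norm1_le_vnorm (vsub (q1, q2) (p1, p2))); unfold norm1, dot, vsub in *; simpl in *.
  replace (f (q1, q2) - f (p1, p2) - (g1 x * (q1 - p1) + g2 x * (q2 - p2)))
    with ((g1 (c1, q2) - g1 x) * (q1 - p1) + (g2 (p1, c2) - g2 x) * (q2 - p2)) by lra.
  eapply Rle_trans; [apply Rabs_triang|]; rewrite !Rabs_mult.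
  pose proof (Rabs_pos (q1 - p1)); pose proof (Rabs_pos (q2 - p2)); nra.
Qed.

Lemma strictly_differentiable_sub f g x l m :
  strictly_differentiable f x l -> strictly_differentiable g x m ->
  strictly_differentiable (fun p => f p - g p) x (vsub l m).
Proof.
  intros Hf Hg eps Heps.
  destruct (Hf (eps / 2)) as [r1 [Hr1 H1]]; [lra|].
  destruct (Hg (eps / 2)) as [r2 [Hr2 H2]]; [lra|].
  exists (Rmin r1 r2); split; [apply Rmin_glb_lt; auto|].
  intros p q Hp Hq.
  pose proof (Rmin_l r1 r2); pose proof (Rmin_r r1 r2).
  specialize (H1 p q ltac:(lra) ltac:(lra)); specialize (H2 p q ltac:(lra) ltac:(lra)).
  replace (f q - g q - (f p - g p) - dot (vsub l m) (vsub q p))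
    with ((f q - f p - dot l (vsub q p)) - (g q - g p - dot m (vsub q p)))
    by (unfold dot, vsub; simpl; ring).
  eapply Rle_trans; [apply Rabs_triang|]; rewrite Rabs_Ropp; lra.
Qed.

Lemma derivable_pt_lim_of_linear_bound (h : R -> R) t0 c :
  (forall eps, 0 < eps -> exists r, 0 < r /\ forall t, Rabs (t - t0) < r ->
     Rabs (h t - h t0 - c * (t - t0)) <= eps * Rabs (t - t0)) ->
  derivable_pt_lim h t0 c.
Proof.
  intros H eps Heps; destruct (H (eps / 2)) as [r [Hr Hb]]; [lra|].
  exists (mkposreal r Hr); intros s Hs0 Hs; simpl in Hs.
  specialize (Hb (t0 + s)); replace (t0 + s - t0) with s in Hb by ring.
  replace ((h (t0 + s) - h t0) / s - c) with ((h (t0 + s) - h t0 - c * s) / s) by (field; auto).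
  pose proof (Rabs_pos_lt s Hs0).
  unfold Rdiv; rewrite Rabs_mult, Rabs_inv.
  apply (Rmult_lt_reg_r (Rabs s)); auto; rewrite Rmult_assoc, Rinv_l by lra.
  specialize (Hb Hs); nra.
Qed.

Lemma grad_of_strictly_differentiable f x l :
  strictly_differentiable f x l -> grad f x = l.
Proof.
  intro H; destruct x as [x1 x2], l as [l1 l2]; unfold grad; simpl.
  f_equal; apply is_derive_unique, is_derive_Reals, derivable_pt_lim_of_linear_bound;
    intros eps Heps; destruct (H eps Heps) as [r [Hr Hb]]; exists (r / 2); split; try lra;
    intros t Ht.
  - specialize (Hb (x1, x2) (t, x2)).
    pose proof (vnorm_le_norm1 (vsub (t, x2) (x1, x2))).
    assert (dist2 (t, x2) (x1, x2) < 2 * (r / 2)) by (apply dist2_coords_lt; simpl;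
      rewrite ?Rminus_diag, ?Rabs_R0; lra).
    rewrite dist2_refl in Hb; specialize (Hb Hr ltac:(lra)).
    unfold dot, vsub, norm1 in *; simpl in *; rewrite Rminus_diag, Rabs_R0 in *.
    replace (l1 * (t - x1) + l2 * 0) with (l1 * (t - x1)) in Hb by ring; nra.
  - specialize (Hb (x1, x2) (x1, t)).
    pose proof (vnorm_le_norm1 (vsub (x1, t) (x1, x2))).
    assert (dist2 (x1, t) (x1, x2) < 2 * (r / 2)) by (apply dist2_coords_lt; simpl;
      rewrite ?Rminus_diag, ?Rabs_R0; lra).
    rewrite dist2_refl in Hb; specialize (Hb Hr ltac:(lra)).
    unfold dot, vsub, norm1 in *; simpl in *; rewrite Rminus_diag, Rabs_R0 in *.
    replace (l1 * 0 + l2 * (t - x2)) with (l2 * (t - x2)) in Hb by ring; nra.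
Qed.

Lemma smooth_strictly_differentiable f x :
  smooth f -> strictly_differentiable f x (grad f x).
Proof.
  intro Hf; destruct (Hf 1%nat) as [_ [g1 [g2 [P1 [P2 [C1 C2]]]]]].
  pose proof (strictly_differentiable_of_partials f g1 g2 x P1 P2 C1 C2) as Hd.
  rewrite (grad_of_strictly_differentiable _ _ _ Hd); exact Hd.
Qed.

(** * Transversal zero sets *)

Definition chart (x w n : pt) (al be : R) : pt :=
  (fst x + al * fst w + be * fst n, snd x + al * snd w + be * snd n).

Lemma chart_0 x w n : chart x w n 0 0 = x.
Proof. destruct x; unfold chart; simpl; f_equal; ring. Qed.

Lemma vsub_chart x w n a b a' b' :
  vsub (chart x w n a b) (chart x w n a' b') =
  ((a - a') * fst w + (b - b') * fst n, (a - a') * snd w + (b - b') * snd n).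
Proof. unfold vsub, chart; simpl; f_equal; ring. Qed.

Lemma dist2_chart_le x w n a b a' b' :
  dist2 (chart x w n a b) (chart x w n a' b')
    <= (Rabs (a - a') + Rabs (b - b')) * (norm1 w + norm1 n).
Proof.
  unfold dist2; eapply Rle_trans; [apply vnorm_le_norm1|].
  rewrite vsub_chart; unfold norm1; simpl.
  pose proof (Rabs_triang ((a - a') * fst w) ((b - b') * fst n)).
  pose proof (Rabs_triang ((a - a') * snd w) ((b - b') * snd n)).
  rewrite !Rabs_mult in *.
  pose proof (Rabs_pos (a - a')); pose proof (Rabs_pos (b - b')).
  pose proof (Rabs_pos (fst w)); pose proof (Rabs_pos (snd w)).
  pose proof (Rabs_pos (fst n)); pose proof (Rabs_pos (snd n)).
  nra.
Qed.

Lemma strictly_differentiable_chart f x l w n :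
  strictly_differentiable f x l -> forall eps, 0 < eps -> exists r, 0 < r /\
    forall a b a' b', Rabs a <= r -> Rabs b <= r -> Rabs a' <= r -> Rabs b' <= r ->
      Rabs (f (chart x w n a b) - f (chart x w n a' b')
            - ((a - a') * dot l w + (b - b') * dot l n))
        <= eps * (Rabs (a - a') + Rabs (b - b')).
Proof.
  intros Hf eps Heps; set (K := norm1 w + norm1 n + 1).
  assert (HK : 1 <= K) by (pose proof (norm1_nonneg w); pose proof (norm1_nonneg n); unfold K; lra).
  destruct (Hf (eps / K)) as [r0 [Hr0 H]]; [apply Rdiv_lt_0_compat; lra|].
  exists (r0 / (4 * K)); split; [apply Rdiv_lt_0_compat; lra|].
  assert (Hin : forall s u, Rabs s <= r0 / (4 * K) -> Rabs u <= r0 / (4 * K) ->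
                  dist2 (chart x w n s u) x < r0).
  { intros s u Hs Hu; rewrite <- (chart_0 x w n) at 2.
    eapply Rle_lt_trans; [apply dist2_chart_le|]; rewrite !Rminus_0_r.
    assert (r0 / (4 * K) * K = r0 / 4) by (field; lra).
    pose proof (Rabs_pos s); pose proof (Rabs_pos u).
    assert (norm1 w + norm1 n <= K) by (unfold K; lra); nra. }
  intros a b a' b' Ha Hb Ha' Hb'.
  specialize (H _ _ (Hin a' b' Ha' Hb') (Hin a b Ha Hb)).
  replace (dot l (vsub (chart x w n a b) (chart x w n a' b')))
    with ((a - a') * dot l w + (b - b') * dot l n) in H
    by (rewrite vsub_chart; unfold dot; simpl; ring).
  eapply Rle_trans; [apply H|].
  pose proof (dist2_chart_le x w n a b a' b'); unfold dist2 in *.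
  pose proof (Rabs_pos (a - a')); pose proof (Rabs_pos (b - b')).
  replace (eps * (Rabs (a - a') + Rabs (b - b')))
    with (eps / K * ((Rabs (a - a') + Rabs (b - b')) * K)) by (field; lra).
  apply Rmult_le_compat_l; [apply Rlt_le, Rdiv_lt_0_compat; lra|].
  assert (norm1 w + norm1 n <= K) by (unfold K; lra); nra.
Qed.

Lemma dual_basis la lb : cross la lb <> 0 -> exists w n,
  dot la w = 0 /\ dot lb w = 1 /\ dot la n = 1 /\ dot lb n = 0.
Proof.
  intro H; exists (- snd la / cross la lb, fst la / cross la lb),
    (snd lb / cross la lb, - fst lb / cross la lb).
  unfold dot, cross in *; simpl; repeat split; field; auto.
Qed.

Definition sign_change (a b : pt -> R) (y : pt) : Prop :=
  forall e, 0 < e -> exists zp zm, dist2 zp y < e /\ dist2 zm y < e /\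
    0 < a zp /\ a zm < 0 /\ 0 < b zp /\ 0 < b zm.

Definition adapted_chart (a b : pt -> R) (x w n : pt) (r : R) : Prop :=
  forall al be al' be', Rabs al <= r -> Rabs be <= r -> Rabs al' <= r -> Rabs be' <= r ->
    Rabs (a (chart x w n al be) - a (chart x w n al' be') - (be - be'))
      <= (Rabs (al - al') + Rabs (be - be')) / 4 /\
    Rabs (b (chart x w n al be) - b (chart x w n al' be') - (al - al'))
      <= (Rabs (al - al') + Rabs (be - be')) / 4.

Lemma adapted_chart_exists a b x la lb w n :
  strictly_differentiable a x la -> strictly_differentiable b x lb ->
  dot la w = 0 -> dot lb w = 1 -> dot la n = 1 -> dot lb n = 0 ->
  exists r, 0 < r /\ adapted_chart a b x w n r.
Proof.
  intros Da Db Law Lbw Lan Lbn.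
  destruct (strictly_differentiable_chart a x la w n Da (1 / 4)) as [ra [Hra Ea]]; [lra|].
  destruct (strictly_differentiable_chart b x lb w n Db (1 / 4)) as [rb [Hrb Eb]]; [lra|].
  exists (Rmin ra rb); split; [apply Rmin_glb_lt; auto|].
  intros al be al' be' ? ? ? ?; pose proof (Rmin_l ra rb); pose proof (Rmin_r ra rb).
  specialize (Ea al be al' be' ltac:(lra) ltac:(lra) ltac:(lra) ltac:(lra)).
  specialize (Eb al be al' be' ltac:(lra) ltac:(lra) ltac:(lra) ltac:(lra)).
  rewrite Law, Lan in Ea; rewrite Lbw, Lbn in Eb.
  replace ((al - al') * 0 + (be - be') * 1) with (be - be') in Ea by ring.
  replace ((al - al') * 1 + (be - be') * 0) with (al - al') in Eb by ring.
  split; lra.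
Qed.

Section Chart.

Variables (a b : pt -> R) (x w n : pt) (r : R).
Hypothesis Hchart : adapted_chart a b x w n r.
Hypotheses (Hax : a x = 0) (Hbx : b x = 0).

Lemma chart_zero_crossing t : cont2 a -> 0 < t -> 2 * t <= r ->
  exists s, Rabs s <= t /\ a (chart x w n t s) = 0 /\ t / 2 <= b (chart x w n t s).
Proof.
  intros Ca Ht Htr.
  assert (R0 : Rabs 0 <= r) by (rewrite Rabs_R0; lra).
  assert (Rt : Rabs t <= r) by (rewrite Rabs_pos_eq; lra).
  assert (Rmt : Rabs (- t) <= r) by (rewrite Rabs_Ropp, Rabs_pos_eq; lra).
  assert (Hpos : 0 < a (chart x w n t t)).
  { pose proof (proj1 (Hchart t t 0 0 Rt Rt R0 R0)) as H.
    rewrite chart_0, Hax, !Rminus_0_r in H.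
    rewrite (Rabs_pos_eq t) in H by lra; apply Rabs_le_between in H; lra. }
  assert (Hneg : a (chart x w n t (- t)) < 0).
  { pose proof (proj1 (Hchart t (- t) 0 0 Rt Rmt R0 R0)) as H.
    rewrite chart_0, Hax, !Rminus_0_r in H.
    rewrite Rabs_Ropp, (Rabs_pos_eq t) in H by lra; apply Rabs_le_between in H; lra. }
  destruct (IVT (fun s => a (chart x w n t s)) (- t) t
              (cont2_line a (fst x + t * fst w) (snd x + t * snd w) (fst n) (snd n) Ca)
              ltac:(lra) Hneg Hpos) as [s [Hs Has]].
  assert (Hst : Rabs s <= t) by (apply Rabs_le; lra).
  exists s; split; [|split]; auto.
  pose proof (proj2 (Hchart t s 0 0 Rt ltac:(lra) R0 R0)) as H.
  rewrite chart_0, Hbx, !Rminus_0_r in H.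
  rewrite (Rabs_pos_eq t) in H by lra; apply Rabs_le_between in H; lra.
Qed.

Lemma chart_sign_change t s : 0 < t -> 2 * t <= r -> Rabs s <= t ->
  a (chart x w n t s) = 0 -> t / 2 <= b (chart x w n t s) ->
  sign_change a b (chart x w n t s).
Proof.
  intros Ht Htr Hs Has Hbs e He.
  set (K := norm1 w + norm1 n + 1).
  assert (HK : 1 <= K) by (pose proof (norm1_nonneg w); pose proof (norm1_nonneg n); unfold K; lra).
  set (sg := Rmin t (e / K) / 2).
  assert (Hsg : 0 < sg).
  { unfold sg; assert (0 < Rmin t (e / K)) by (apply Rmin_glb_lt; [|apply Rdiv_lt_0_compat]; lra).
    lra. }
  assert (Hsg1 : sg <= t / 2) by (unfold sg; pose proof (Rmin_l t (e / K)); lra).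
  assert (Hsg2 : sg * K < e).
  { unfold sg; pose proof (Rmin_r t (e / K)).
    assert (e / K * K = e) by (field; lra); nra. }
  assert (Rt : Rabs t <= r) by (rewrite Rabs_pos_eq; lra).
  assert (Rs : Rabs s <= r) by lra.
  assert (Hnear : forall s', Rabs (s' - s) = sg -> Rabs s' <= r /\
             dist2 (chart x w n t s') (chart x w n t s) < e).
  { intros s' Hs'; split.
    - assert (Rabs (s' - s) <= sg) by lra; apply Rabs_le_between in H.
      apply Rabs_le; apply Rabs_le_between in Hs; lra.
    - eapply Rle_lt_trans; [apply dist2_chart_le|]; rewrite Rminus_diag, Rabs_R0, Hs'.
      unfold K in *; lra. }
  assert (Ep : Rabs (s + sg - s) = sg)
    by (replace (s + sg - s) with sg by ring; apply Rabs_pos_eq; lra).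
  assert (Em : Rabs (s - sg - s) = sg)
    by (replace (s - sg - s) with (- sg) by ring; rewrite Rabs_Ropp; apply Rabs_pos_eq; lra).
  destruct (Hnear _ Ep) as [Rp Dp]; destruct (Hnear _ Em) as [Rm Dm].
  exists (chart x w n t (s + sg)), (chart x w n t (s - sg)).
  destruct (Hchart t (s + sg) t s Rt Rp Rt Rs) as [A1 B1].
  destruct (Hchart t (s - sg) t s Rt Rm Rt Rs) as [A2 B2].
  rewrite Rminus_diag, Rabs_R0, Has in *; rewrite Ep in A1, B1; rewrite Em in A2, B2.
  apply Rabs_le_between in A1, A2, B1, B2.
  repeat split; auto; lra.
Qed.

End Chart.

Lemma sign_change_points_near a b x la lb :
  cont2 a -> strictly_differentiable a x la -> strictly_differentiable b x lb ->
  a x = 0 -> b x = 0 -> cross la lb <> 0 ->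
  forall e, 0 < e -> exists y, 0 < dist2 y x < e /\ sign_change a b y.
Proof.
  intros Ca Da Db Hax Hbx Hc e He.
  destruct (dual_basis la lb Hc) as [w [n [Law [Lbw [Lan Lbn]]]]].
  destruct (adapted_chart_exists a b x la lb w n Da Db Law Lbw Lan Lbn) as [r [Hr Hchart]].
  set (K := norm1 w + norm1 n + 1).
  assert (HK : 1 <= K) by (pose proof (norm1_nonneg w); pose proof (norm1_nonneg n); unfold K; lra).
  set (t := Rmin (r / 2) (e / (4 * K))).
  assert (Ht : 0 < t) by (unfold t; apply Rmin_glb_lt; [|apply Rdiv_lt_0_compat]; lra).
  assert (Htr : 2 * t <= r) by (unfold t; pose proof (Rmin_l (r / 2) (e / (4 * K))); lra).
  assert (Hte : t * K <= e / 4).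
  { unfold t; pose proof (Rmin_r (r / 2) (e / (4 * K))).
    assert (e / (4 * K) * K = e / 4) by (field; lra); nra. }
  destruct (chart_zero_crossing a b x w n r Hchart Hax Hbx t Ca Ht Htr) as [s [Hs [Has Hbs]]].
  exists (chart x w n t s); split; [split|].
  - apply dist2_pos; intro E; rewrite E in Hbs; lra.
  - rewrite <- (chart_0 x w n) at 2; eapply Rle_lt_trans; [apply dist2_chart_le|].
    rewrite !Rminus_0_r, (Rabs_pos_eq t) by lra; pose proof (Rabs_pos s); unfold K in *; nra.
  - exact (chart_sign_change a b x w n r Hchart t s Ht Htr Hs Has Hbs).
Qed.

(** * Half-tangents *)

Lemma chord_estimate f x l : strictly_differentiable f x l ->
  forall eps, 0 < eps -> exists r, 0 < r /\ forall y, 0 < dist2 y x < r ->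
    Rabs (dot l (vscale (/ dist2 y x) (vsub y x)) - (f y - f x) / dist2 y x) <= eps.
Proof.
  intros Hf eps Heps; destruct (Hf eps Heps) as [r [Hr H]]; exists r; split; auto.
  intros y [Hy0 Hy]; specialize (H x y); rewrite dist2_refl in H; specialize (H Hr Hy).
  replace (dot l (vscale (/ dist2 y x) (vsub y x)) - (f y - f x) / dist2 y x)
    with (- (f y - f x - dot l (vsub y x)) / dist2 y x) by (unfold dot, vscale; simpl; field; lra).
  unfold Rdiv; rewrite Rabs_mult, Rabs_Ropp, Rabs_inv, (Rabs_pos_eq (dist2 y x)) by lra.
  apply (Rmult_le_reg_r (dist2 y x)); auto; rewrite Rmult_assoc, Rinv_l, Rmult_1_r by lra; exact H.
Qed.

Lemma chord_unit x y : 0 < dist2 y x ->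
  dot (vscale (/ dist2 y x) (vsub y x)) (vscale (/ dist2 y x) (vsub y x)) = 1.
Proof.
  intro H; pose proof (vnorm_sqr (vsub y x)); fold (dist2 y x) in *.
  replace (dot (vscale (/ dist2 y x) (vsub y x)) (vscale (/ dist2 y x) (vsub y x)))
    with (dot (vsub y x) (vsub y x) / (dist2 y x * dist2 y x))
    by (unfold dot, vscale; simpl; field; lra).
  rewrite <- H0; field; lra.
Qed.

Lemma half_tangent_unique S x d d' :
  is_half_tangent S x d -> is_half_tangent S x d' -> d = d'.
Proof.
  intros [_ [Hacc H]] [_ [_ H']].
  assert (Hclose : forall e, 0 < e ->
            Rabs (fst d - fst d') <= 2 * e /\ Rabs (snd d - snd d') <= 2 * e).
  { intros e He; destruct (H e He) as [r [Hr Hu]]; destruct (H' e He) as [r' [Hr' Hu']].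
    destruct (Hacc (Rmin r r')) as [y [Sy [Hy0 Hy]]]; [apply Rmin_glb_lt; auto|].
    pose proof (Rmin_l r r'); pose proof (Rmin_r r r').
    specialize (Hu y Sy ltac:(lra)); specialize (Hu' y Sy ltac:(lra)).
    set (u := vscale (/ dist2 y x) (vsub y x)) in *.
    pose proof (Rabs_fst_sub_le_dist2 u d); pose proof (Rabs_snd_sub_le_dist2 u d).
    pose proof (Rabs_fst_sub_le_dist2 u d'); pose proof (Rabs_snd_sub_le_dist2 u d').
    split; apply Rabs_le;
      repeat match goal with h : Rabs _ <= _ |- _ => apply Rabs_le_between in h end; lra. }
  destruct d as [d1 d2], d' as [d1' d2']; simpl in Hclose.
  f_equal; apply Rminus_diag_uniq, eq_0_of_small; intros eps Heps;
    destruct (Hclose (eps / 2)) as [H1 H2]; lra.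
Qed.

Definition rot (v : pt) : pt := (- snd v, fst v).

(* Unit tangent at [x] to the curve [a = 0], oriented into [b > 0], where [la], [lb]
   are the gradients of [a], [b] at [x]. *)
Definition curve_dir (la lb : pt) : pt := vscale (sign (cross la lb) / vnorm la) (rot la).

Lemma sign_sqr c : c <> 0 -> sign c * sign c = 1.
Proof.
  intro H; destruct (Rlt_or_le 0 c).
  - rewrite sign_eq_1 by auto; ring.
  - rewrite sign_eq_m1 by lra; ring.
Qed.

Lemma sign_mul_self c : sign c * c = Rabs c.
Proof.
  destruct (Rtotal_order c 0) as [H|[->|H]].
  - rewrite sign_eq_m1, Rabs_left by auto; ring.
  - rewrite sign_0, Rabs_R0; ring.
  - rewrite sign_eq_1, Rabs_pos_eq by lra; ring.
Qed.

Lemma cross_neq0_l l m : cross l m <> 0 -> l <> (0, 0).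
Proof. intros H E; apply H; rewrite E; unfold cross; simpl; ring. Qed.

Lemma dot_curve_dir l m l' m' : cross l m <> 0 -> cross l' m' <> 0 ->
  dot (curve_dir l m) (curve_dir l' m')
    = sign (cross l m) * sign (cross l' m') * (dot l l' / (vnorm l * vnorm l')).
Proof.
  intros H H'; pose proof (vnorm_pos _ (cross_neq0_l _ _ H));
    pose proof (vnorm_pos _ (cross_neq0_l _ _ H')).
  unfold curve_dir, rot, dot, vscale; simpl; field; lra.
Qed.

Lemma cross_curve_dir l m l' m' : cross l m <> 0 -> cross l' m' <> 0 ->
  cross (curve_dir l m) (curve_dir l' m')
    = sign (cross l m) * sign (cross l' m') * (cross l l' / (vnorm l * vnorm l')).
Proof.
  intros H H'; pose proof (vnorm_pos _ (cross_neq0_l _ _ H));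
    pose proof (vnorm_pos _ (cross_neq0_l _ _ H')).
  unfold curve_dir; set (c := cross l m); set (c' := cross l' m').
  unfold rot, cross, vscale; simpl; field; lra.
Qed.

Lemma vnorm_curve_dir l m : cross l m <> 0 -> vnorm (curve_dir l m) = 1.
Proof.
  intro H; apply vnorm_eq_1; rewrite dot_curve_dir, sign_sqr, <- vnorm_sqr by auto.
  pose proof (vnorm_pos _ (cross_neq0_l _ _ H)); field; lra.
Qed.

Lemma circle_near_top s P Y eps : 0 < s -> P * P + Y * Y = s * s ->
  Rabs P <= eps -> eps <= s / 2 -> - (s / 2) < Y -> s * (s - Y) <= eps * eps.
Proof.
  intros Hs HPY HP Heps HY.
  assert (P * P = Rabs P * Rabs P)
    by (rewrite <- Rabs_mult; symmetry; apply Rabs_pos_eq; nra).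
  assert (HP2 : P * P <= eps * eps) by (pose proof (Rabs_pos P); nra).
  assert (Heps2 : eps * eps <= s * s / 4) by (pose proof (Rabs_pos P); nra).
  assert (HYpos : 0 < Y).
  { destruct (Rlt_or_le 0 Y) as [|HY0]; auto.
    assert (Y * Y <= - Y * (s / 2)) by nra; nra. }
  assert (Y <= s) by nra.
  assert (s * (s - Y) <= (s + Y) * (s - Y)) by nra.
  nra.
Qed.

Section CurveCoordinates.

Variables la lb u : pt.
Hypotheses (Hc : cross la lb <> 0) (Hu : dot u u = 1).

Lemma curve_coord_circle :
  dot la u * dot la u + (sign (cross la lb) * cross la u) * (sign (cross la lb) * cross la u)
    = vnorm la * vnorm la.
Proof.
  replace ((sign (cross la lb) * cross la u) * (sign (cross la lb) * cross la u))
    with (sign (cross la lb) * sign (cross la lb) * (cross la u * cross la u)) by ring.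
  rewrite sign_sqr, Rmult_1_l, vnorm_sqr by auto.
  transitivity (dot la la * dot u u); [unfold dot, cross; ring|rewrite Hu; ring].
Qed.

Lemma curve_coord_side :
  Rabs (cross la lb) * (sign (cross la lb) * cross la u)
    = dot lb u * (vnorm la * vnorm la) - dot la lb * dot la u.
Proof.
  rewrite <- sign_mul_self, vnorm_sqr.
  replace (sign (cross la lb) * cross la lb * (sign (cross la lb) * cross la u))
    with (sign (cross la lb) * sign (cross la lb) * (cross la lb * cross la u)) by ring.
  rewrite sign_sqr by auto; unfold dot, cross; ring.
Qed.

Lemma curve_coord_dist :
  dot (vsub u (curve_dir la lb)) (vsub u (curve_dir la lb))
    = 2 - 2 * (sign (cross la lb) * cross la u) / vnorm la.
Proof.
  pose proof (vnorm_pos _ (cross_neq0_l _ _ Hc)).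
  replace (dot (vsub u (curve_dir la lb)) (vsub u (curve_dir la lb)))
    with (dot u u - 2 * dot u (curve_dir la lb) + dot (curve_dir la lb) (curve_dir la lb))
    by (unfold dot, vsub; simpl; ring).
  rewrite Hu, dot_curve_dir, sign_sqr, <- vnorm_sqr by auto.
  unfold curve_dir; set (c := cross la lb); unfold rot, dot, vscale, cross; simpl; field; lra.
Qed.

End CurveCoordinates.

Lemma curve_dir_close la lb : cross la lb <> 0 ->
  forall eta, 0 < eta -> exists eps, 0 < eps /\ forall u, dot u u = 1 ->
    Rabs (dot la u) <= eps -> - eps <= dot lb u -> vnorm (vsub u (curve_dir la lb)) < eta.
Proof.
  intros Hc eta Heta.
  set (c := cross la lb) in *; set (s := vnorm la); set (p := dot la lb).
  assert (Hs : 0 < s) by apply (vnorm_pos _ (cross_neq0_l _ _ Hc)).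
  assert (Habsc : 0 < Rabs c) by (apply Rabs_pos_lt; auto).
  pose proof (Rabs_pos p).
  assert (Hden : 0 < 4 * (s * s + Rabs p + 1)) by nra.
  set (e3 := s * Rabs c / (4 * (s * s + Rabs p + 1))).
  assert (He3 : 0 < e3) by (unfold e3; apply Rdiv_lt_0_compat; nra).
  set (eps := Rmin (Rmin (s / 2) (eta * s / 2)) e3).
  assert (Heps1 : eps <= s / 2) by (eapply Rle_trans; [apply Rmin_l|apply Rmin_l]).
  assert (Heps2 : eps <= eta * s / 2) by (eapply Rle_trans; [apply Rmin_l|apply Rmin_r]).
  assert (Heps3 : eps * (4 * (s * s + Rabs p + 1)) <= s * Rabs c).
  { assert (eps <= e3) by apply Rmin_r.
    assert (e3 * (4 * (s * s + Rabs p + 1)) = s * Rabs c) by (unfold e3; field; lra); nra. }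
  assert (Heps : 0 < eps) by (unfold eps; repeat apply Rmin_glb_lt; nra).
  exists eps; split; auto; intros u Hu HP HQ.
  pose proof (curve_coord_circle la lb u Hc Hu) as HPY.
  pose proof (curve_coord_side la lb u Hc) as HcY.
  pose proof (curve_coord_dist la lb u Hc Hu) as Hdist.
  fold c s p in HPY, HcY, Hdist.
  set (P := dot la u) in *; set (Y := sign c * cross la u) in *.
  assert (HY : - (s / 2) < Y).
  { assert (p * P <= Rabs p * eps).
    { eapply Rle_trans; [apply Rle_abs|]; rewrite Rabs_mult.
      apply Rmult_le_compat_l; auto. }
    assert (- eps * (s * s) <= dot lb u * (s * s)) by nra.
    assert (0 < s * Rabs c) by nra.
    apply (Rmult_lt_reg_l (Rabs c)); auto; lra. }
  pose proof (circle_near_top s P Y eps Hs HPY HP Heps1 HY).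
  assert (2 - 2 * Y / s < eta * eta).
  { replace (2 - 2 * Y / s) with (2 * (s * (s - Y)) / (s * s)) by (field; lra).
    apply (Rmult_lt_reg_r (s * s)); [nra|]; unfold Rdiv; rewrite Rmult_assoc, Rinv_l by nra.
    nra. }
  pose proof (vnorm_nonneg (vsub u (curve_dir la lb))).
  pose proof (vnorm_sqr (vsub u (curve_dir la lb))).
  nra.
Qed.

Lemma half_tangent_of_transversal (S : pt -> Prop) a b x la lb :
  cont2 a -> strictly_differentiable a x la -> strictly_differentiable b x lb ->
  a x = 0 -> b x = 0 -> cross la lb <> 0 ->
  (forall y, S y -> a y = 0 /\ 0 <= b y) ->
  (exists r, 0 < r /\ forall y, dist2 y x < r -> sign_change a b y -> S y) ->
  is_half_tangent S x (curve_dir la lb).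
Proof.
  intros Ca Da Db Hax Hbx Hc HS [r [Hr HR]].
  split; [apply vnorm_curve_dir; auto|split].
  - intros e He.
    destruct (sign_change_points_near a b x la lb Ca Da Db Hax Hbx Hc (Rmin e r)) as [y [Hy Hsc]];
      [apply Rmin_glb_lt; auto|].
    pose proof (Rmin_l e r); pose proof (Rmin_r e r).
    exists y; split; [apply HR|]; auto; lra.
  - intros eta Heta; destruct (curve_dir_close la lb Hc eta Heta) as [eps [Heps Hclose]].
    destruct (chord_estimate a x la Da eps Heps) as [ra [Hra Ea]].
    destruct (chord_estimate b x lb Db eps Heps) as [rb [Hrb Eb]].
    exists (Rmin ra rb); split; [apply Rmin_glb_lt; auto|]; intros y Sy Hy.
    pose proof (Rmin_l ra rb); pose proof (Rmin_r ra rb).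
    specialize (Ea y ltac:(lra)); specialize (Eb y ltac:(lra)).
    destruct (HS y Sy) as [Hay Hby]; rewrite Hay, Hax in Ea; rewrite Hbx in Eb.
    assert (0 <= (b y - 0) / dist2 y x) by (apply Rdiv_le_0_compat; lra).
    replace ((0 - 0) / dist2 y x) with 0 in Ea by (field; lra); rewrite Rminus_0_r in Ea.
    apply Rabs_le_between in Eb; apply Hclose; [apply chord_unit; lra|lra|lra].
Qed.

(** * Cells of the partition *)

(* [Defs.interior] is qualified because [Reals] also exports [Rtopology.interior]. *)
Lemma interior_mono (S T : pt -> Prop) x :
  (forall y, S y -> T y) -> Defs.interior S x -> Defs.interior T x.
Proof. intros H [r [Hr HS]]; exists r; split; auto. Qed.

Lemma interior_and (S T : pt -> Prop) x :
  Defs.interior S x -> Defs.interior T x -> Defs.interior (fun y => S y /\ T y) x.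
Proof.
  intros [r [Hr HS]] [r' [Hr' HT]]; exists (Rmin r r'); split; [apply Rmin_glb_lt; auto|].
  intros y Hy; pose proof (Rmin_l r r'); pose proof (Rmin_r r r'); split; [apply HS|apply HT]; lra.
Qed.

Lemma interior_lt f g z : cont2 f -> cont2 g -> f z < g z -> Defs.interior (fun w => f w < g w) z.
Proof.
  intros Hf Hg Hz; destruct (cont2_sub g f Hg Hf z (g z - f z)) as [r [Hr H]]; [lra|].
  exists r; split; auto; intros w Hw; specialize (H w Hw); apply Rabs_def2 in H; lra.
Qed.

Section Cells.

Variables (D : pt -> Prop) (phi : nat -> pt -> R).
Hypothesis Hcont : forall k, (k < 3)%nat -> cont2 (phi k).

Lemma closure_Omega_le j m y : (j < 3)%nat -> (m < 3)%nat ->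
  closure (Omega D phi j) y -> phi j y <= phi m y.
Proof.
  intros Hj Hm Hcl; destruct (Nat.eq_dec m j) as [->|Hne]; [lra|].
  destruct (Rle_lt_dec (phi j y) (phi m y)) as [|Hlt]; auto; exfalso.
  destruct (interior_lt (phi m) (phi j) y (Hcont m Hm) (Hcont j Hj) Hlt) as [r [Hr Hle]].
  destruct (Hcl r Hr) as [z [[e [He Hz]] Hzy]].
  destruct (Hz z) as [_ Hmin]; [rewrite dist2_refl; auto|].
  specialize (Hmin m Hm Hne); specialize (Hle z Hzy); lra.
Qed.

Lemma Omega_of_strict_min j z : is_open D -> (j < 3)%nat -> D z ->
  (forall m, (m < 3)%nat -> m <> j -> phi j z < phi m z) -> Omega D phi j z.
Proof.
  intros HD Hj Dz Hmin.
  assert (Hk : forall m, (m < 3)%nat -> Defs.interior (fun w => m <> j -> phi j w <= phi m w) z).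
  { intros m Hm; destruct (Nat.eq_dec m j) as [->|Hne].
    - exists 1; split; [lra|]; intros; congruence.
    - apply (interior_mono (fun w => phi j w < phi m w)); [intros; lra|].
      apply interior_lt; auto. }
  unfold Omega; apply (interior_mono (fun w => D w /\ (0%nat <> j -> phi j w <= phi 0%nat w) /\
    (1%nat <> j -> phi j w <= phi 1%nat w) /\ (2%nat <> j -> phi j w <= phi 2%nat w))).
  - intros w [Dw [H0 [H1 H2]]]; split; auto.
    intros m Hm Hne; destruct m as [|[|[|m]]]; auto; lia.
  - repeat apply interior_and; [apply HD, Dz|apply Hk; lia ..].
Qed.

Lemma boundary_Omega_of j y : (j < 3)%nat ->
  (forall e, 0 < e -> exists z, dist2 z y < e /\ Omega D phi j z) ->
  (forall e, 0 < e -> exists z, dist2 z y < e /\ exists m, (m < 3)%nat /\ phi m z < phi j z) ->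
  boundary (Omega D phi j) y.
Proof.
  intros Hj Hin Hout; split.
  - intros e He; destruct (Hin e He) as [z [Hz Oz]]; exists z; auto.
  - intros [e [He Hi]]; destruct (Hout e He) as [z [Hz [m [Hm Hlt]]]].
    destruct (Hi z Hz) as [e' [He' Hz']].
    destruct (Hz' z) as [_ Hmin]; [rewrite dist2_refl; auto|].
    destruct (Nat.eq_dec m j) as [->|Hne]; [lra|].
    specialize (Hmin m Hm Hne); lra.
Qed.

Section Pair.

Variables i j k : nat.
Hypotheses (Hi : (i < 3)%nat) (Hj : (j < 3)%nat) (Hk : (k < 3)%nat).
Hypotheses (Hij : i <> j) (Hjk : j <> k) (Hik : i <> k).

Lemma E_pair_le y : E D phi (i :: j :: nil) y -> phi j y = phi i y /\ phi i y <= phi k y.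
Proof.
  intro Hy; destruct (Hy i) as [Ci _]; [simpl; auto|]; destruct (Hy j) as [Cj _]; [simpl; auto|].
  pose proof (closure_Omega_le i j y Hi Hj Ci); pose proof (closure_Omega_le j i y Hj Hi Cj).
  pose proof (closure_Omega_le i k y Hi Hk Ci); lra.
Qed.

Lemma E_pair_of_sign_change y : is_open D -> D y ->
  sign_change (phidiff phi j i) (phidiff phi k i) y -> E D phi (i :: j :: nil) y.
Proof.
  intros HD Dy Hsc; destruct (HD y Dy) as [r [Hr HDy]].
  assert (Hother : forall l m, l = i \/ l = j -> (m < 3)%nat -> m <> l ->
            m = i \/ m = j \/ m = k) by lia.
  unfold phidiff in Hsc.
  intros l Hl; destruct Hl as [<-|[<-|[]]]; apply boundary_Omega_of; auto; intros e He.
  - destruct (Hsc (Rmin e r)) as [zp [zm [Hzp [_ [Hap [_ [Hbp _]]]]]]]; [apply Rmin_glb_lt; auto|].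
    pose proof (Rmin_l e r); pose proof (Rmin_r e r).
    exists zp; split; [lra|]; apply Omega_of_strict_min; auto; [apply HDy; lra|].
    intros m Hm Hne.
    destruct (Hother i m ltac:(auto) Hm Hne) as [-> | [-> | ->]]; lra || congruence.
  - destruct (Hsc e He) as [zp [zm [_ [Hzm [_ [Ham _]]]]]].
    exists zm; split; auto; exists j; split; auto; lra.
  - destruct (Hsc (Rmin e r)) as [zp [zm [_ [Hzm [_ [Ham [_ Hbm]]]]]]]; [apply Rmin_glb_lt; auto|].
    pose proof (Rmin_l e r); pose proof (Rmin_r e r).
    exists zm; split; [lra|]; apply Omega_of_strict_min; auto; [apply HDy; lra|].
    intros m Hm Hne.
    destruct (Hother j m ltac:(auto) Hm Hne) as [-> | [-> | ->]]; lra || congruence.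
  - destruct (Hsc e He) as [zp [zm [Hzp [_ [Hap _]]]]].
    exists zp; split; auto; exists i; split; auto; lra.
Qed.

End Pair.

End Cells.

(** * Angles at the junction *)

Definition vangle (u v : pt) : R := acos (dot u v / (vnorm u * vnorm v)).

Lemma vnorm_vsub_sym a b : vnorm (vsub a b) = vnorm (vsub b a).
Proof. unfold vnorm, dot, vsub; simpl; f_equal; ring. Qed.

Lemma acos_cos_of_sin_pos th : 0 <= th <= 2 * PI -> 0 < sin th -> acos (cos th) = th.
Proof.
  intros [H0 H1] Hs; apply acos_cos; split; auto.
  destruct (Rle_lt_dec th PI) as [|Hlt]; auto; destruct H1 as [H1|H1].
  - pose proof (sin_lt_0 th Hlt H1); lra.
  - subst; rewrite sin_2PI in Hs; lra.
Qed.

Lemma acos_cos_2PI_minus th : 0 <= th <= 2 * PI -> sin th < 0 -> acos (cos th) = 2 * PI - th.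
Proof.
  intros Hth Hs; replace (cos th) with (cos (2 * PI - th))
    by (rewrite cos_minus, cos_2PI, sin_2PI; ring).
  apply acos_cos_of_sin_pos; [lra|]; rewrite sin_minus, cos_2PI, sin_2PI; lra.
Qed.

Lemma le_PI_of_sin_pos th : 0 <= th <= 2 * PI -> 0 < sin th -> th <= PI.
Proof. intros; rewrite <- (acos_cos_of_sin_pos th) by auto; apply acos_bound. Qed.

Lemma PI_lt_of_sin_neg th : 0 <= th -> sin th < 0 -> PI < th.
Proof.
  intros H0 Hs; destruct (Rle_lt_dec th PI) as [Hle|]; auto.
  pose proof (sin_ge_0 th H0 Hle); lra.
Qed.

Lemma beta_eq_acos th0 th1 : 0 <= th0 < 2 * PI -> 0 <= th1 < 2 * PI ->
  sin th0 * sin th1 < 0 -> 0 < sin th0 * sin (th1 - th0) ->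
  beta th0 th1 0 = acos (cos th0) /\ beta th0 th1 1 = acos (cos (th1 - th0)) /\
  beta th0 th1 2 = acos (cos th1).
Proof.
  intros R0 R1 H01 H10; unfold beta.
  destruct (Rlt_or_le 0 (sin th0)) as [S0|S0].
  - assert (S1 : sin th1 < 0) by nra; assert (S10 : 0 < sin (th1 - th0)) by nra.
    pose proof (le_PI_of_sin_pos th0 ltac:(lra) S0).
    pose proof (PI_lt_of_sin_neg th1 ltac:(lra) S1).
    destruct (Rle_dec th0 th1); [|lra].
    split; [|split]; symmetry.
    + apply acos_cos_of_sin_pos; auto; lra.
    + apply acos_cos_of_sin_pos; auto; lra.
    + apply acos_cos_2PI_minus; auto; lra.
  - assert (S0' : sin th0 < 0) by (destruct S0; auto; subst; rewrite H in H01; lra).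
    assert (S1 : 0 < sin th1) by nra; assert (S10 : sin (th1 - th0) < 0) by nra.
    pose proof (le_PI_of_sin_pos th1 ltac:(lra) S1).
    pose proof (PI_lt_of_sin_neg th0 ltac:(lra) S0').
    destruct (Rle_dec th0 th1); [lra|].
    split; [|split]; symmetry.
    + apply acos_cos_2PI_minus; auto; lra.
    + replace (cos (th1 - th0)) with (cos (th0 - th1)) by (rewrite !cos_minus; ring).
      apply acos_cos_of_sin_pos; [lra|]; rewrite sin_minus in *; lra.
    + apply acos_cos_of_sin_pos; auto; lra.
Qed.

Lemma ccw_angle_diff a b c th th' : vnorm a = 1 -> ccw_angle a b th -> ccw_angle a c th' ->
  cos (th' - th) = dot b c /\ sin (th' - th) = cross b c.
Proof.
  intros Ha [_ [Cb Sb]] [_ [Cc Sc]].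
  assert (Haa : dot a a = 1) by (rewrite <- vnorm_sqr, Ha; ring).
  rewrite cos_minus, sin_minus, Cb, Sb, Cc, Sc; split.
  - transitivity (dot a a * dot b c); [unfold dot, cross; ring|rewrite Haa; ring].
  - transitivity (dot a a * cross b c); [unfold dot, cross; ring|rewrite Haa; ring].
Qed.

Lemma beta_junction g0 g1 g2 th0 th1 :
  cross (vsub g1 g0) (vsub g2 g0) <> 0 ->
  ccw_angle (curve_dir (vsub g2 g0) (vsub g1 g0)) (curve_dir (vsub g1 g0) (vsub g2 g0)) th0 ->
  ccw_angle (curve_dir (vsub g2 g0) (vsub g1 g0)) (curve_dir (vsub g2 g1) (vsub g0 g1)) th1 ->
  beta th0 th1 0 = vangle (vsub g1 g0) (vsub g0 g2) /\
  beta th0 th1 1 = vangle (vsub g2 g1) (vsub g1 g0) /\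
  beta th0 th1 2 = vangle (vsub g0 g2) (vsub g2 g1).
Proof.
  set (De := cross (vsub g1 g0) (vsub g2 g0)); intros HDe Hth0 Hth1.
  assert (X02 : cross (vsub g2 g0) (vsub g1 g0) = - De) by (unfold De, cross, vsub; simpl; ring).
  assert (X12 : cross (vsub g2 g1) (vsub g0 g1) = De) by (unfold De, cross, vsub; simpl; ring).
  assert (X21 : cross (vsub g2 g0) (vsub g2 g1) = De) by (unfold De, cross, vsub; simpl; ring).
  assert (X10 : cross (vsub g1 g0) (vsub g2 g1) = De) by (unfold De, cross, vsub; simpl; ring).
  assert (H02 : cross (vsub g2 g0) (vsub g1 g0) <> 0) by (rewrite X02; lra).
  assert (H12 : cross (vsub g2 g1) (vsub g0 g1) <> 0) by (rewrite X12; lra).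
  pose proof (vnorm_pos _ (cross_neq0_l _ _ HDe)) as N1.
  pose proof (vnorm_pos _ (cross_neq0_l _ _ H02)) as N2.
  pose proof (vnorm_pos _ (cross_neq0_l _ _ H12)) as NC.
  destruct (ccw_angle_diff _ _ _ _ _ (vnorm_curve_dir _ _ H02) Hth0 Hth1) as [C10 S10].
  destruct Hth0 as [R0 [C0 S0]], Hth1 as [R1 [C1 S1]].
  rewrite dot_curve_dir in C0, C1, C10 by auto; rewrite cross_curve_dir in S0, S1, S10 by auto.
  rewrite X02, sign_opp, Ropp_mult_distr_l_reverse, sign_sqr in C0, S0 by auto.
  rewrite X02, X12, sign_opp, Ropp_mult_distr_l_reverse, sign_sqr in C1, S1 by auto.
  rewrite X12, sign_sqr in C10, S10 by auto.
  rewrite X21 in S1; rewrite X10 in S10.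
  unfold vangle; rewrite (vnorm_vsub_sym g0 g2).
  set (n1 := vnorm (vsub g1 g0)) in *; set (n2 := vnorm (vsub g2 g0)) in *;
    set (nc := vnorm (vsub g2 g1)) in *.
  assert (HDe2 : 0 < De * De) by (apply Rsqr_pos_lt; auto).
  destruct (beta_eq_acos th0 th1 R0 R1) as [B0 [B1 B2]].
  - replace (sin th0 * sin th1) with (- (De * De) / (n2 * n1 * (n2 * nc)))
      by (rewrite S0, S1; field; lra).
    apply Rdiv_neg_pos; [lra|]; apply Rmult_lt_0_compat; apply Rmult_lt_0_compat; lra.
  - replace (sin th0 * sin (th1 - th0)) with ((De * De) / (n2 * n1 * (n1 * nc)))
      by (rewrite S0, S10; field; lra).
    apply Rdiv_lt_0_compat; [lra|]; apply Rmult_lt_0_compat; apply Rmult_lt_0_compat; lra.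
  - rewrite B0, B1, B2, C0, C10, C1; unfold dot, vsub; simpl.
    split; [|split]; f_equal; field; lra.
Qed.

Lemma cross_vsub_perm (g : nat -> pt) i j k :
  (i < 3)%nat -> (j < 3)%nat -> (k < 3)%nat -> i <> j -> j <> k -> i <> k ->
  cross (vsub (g 1%nat) (g 0%nat)) (vsub (g 2%nat) (g 0%nat)) <> 0 ->
  cross (vsub (g j) (g i)) (vsub (g k) (g i)) <> 0.
Proof.
  intros Hi Hj Hk Hij Hjk Hik H E; apply H.
  destruct i as [|[|[|i]]], j as [|[|[|j]]], k as [|[|[|k]]]; try lia;
    unfold cross, vsub in *; simpl in *; lra.
Qed.

(** * The triple junction *)

Section Junction.

Variables (D : pt -> Prop) (phi : nat -> pt -> R) (xh : pt).
Hypotheses (HDopen : is_open D) (HxD : D xh).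
Hypothesis Hcont : forall k, (k < 3)%nat -> cont2 (phi k).
Hypothesis Hdiff : forall k, (k < 3)%nat -> strictly_differentiable (phi k) xh (grad (phi k) xh).
Hypothesis HxE : E D phi (0 :: 1 :: 2 :: nil)%nat xh.
Hypothesis Htransv : cross (vsub (grad (phi 1%nat) xh) (grad (phi 0%nat) xh))
                           (vsub (grad (phi 2%nat) xh) (grad (phi 0%nat) xh)) <> 0.

Lemma strictly_differentiable_phidiff i j : (i < 3)%nat -> (j < 3)%nat ->
  strictly_differentiable (phidiff phi i j) xh (vsub (grad (phi i) xh) (grad (phi j) xh)).
Proof. intros; apply strictly_differentiable_sub; auto. Qed.

Lemma grad_phidiff i j : (i < 3)%nat -> (j < 3)%nat ->
  grad (phidiff phi i j) xh = vsub (grad (phi i) xh) (grad (phi j) xh).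
Proof. intros; apply grad_of_strictly_differentiable, strictly_differentiable_phidiff; auto. Qed.

Lemma phidiff_junction i j : (i < 3)%nat -> (j < 3)%nat -> phidiff phi i j xh = 0.
Proof.
  intros Hi Hj.
  assert (Hin : forall l, (l < 3)%nat -> In l (0 :: 1 :: 2 :: nil)%nat) by (simpl; lia).
  pose proof (closure_Omega_le D phi Hcont i j xh Hi Hj (proj1 (HxE i (Hin i Hi)))).
  pose proof (closure_Omega_le D phi Hcont j i xh Hj Hi (proj1 (HxE j (Hin j Hj)))).
  unfold phidiff; lra.
Qed.

Lemma half_tangent_E_pair i j k :
  (i < 3)%nat -> (j < 3)%nat -> (k < 3)%nat -> i <> j -> j <> k -> i <> k ->
  is_half_tangent (E D phi (i :: j :: nil)) xh
    (curve_dir (vsub (grad (phi j) xh) (grad (phi i) xh))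
               (vsub (grad (phi k) xh) (grad (phi i) xh))).
Proof.
  intros Hi Hj Hk Hij Hjk Hik.
  destruct (HDopen xh HxD) as [r [Hr HDx]].
  apply (half_tangent_of_transversal _ (phidiff phi j i) (phidiff phi k i));
    try apply strictly_differentiable_phidiff; try apply phidiff_junction; auto.
  - apply cont2_sub; auto.
  - apply (cross_vsub_perm (fun l => grad (phi l) xh)); auto.
  - intros y Hy; destruct (E_pair_le D phi Hcont i j k Hi Hj Hk y Hy); unfold phidiff; lra.
  - exists r; split; auto; intros y Hy Hsc.
    apply (E_pair_of_sign_change D phi Hcont i j k); auto.
Qed.

End Junction.

Theorem proposition5p2
  (D : pt -> Prop) (phi : nat -> pt -> R) (xh : pt)
  (HDopen : is_open D) (HDbdd : is_bounded D)
  (Hsmooth : forall j, (j < 3)%nat -> smooth (phi j))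
  (Hphi0 : forall p, phi 0%nat p = 0)
  (HxD : D xh)
  (HxE : E D phi (0 :: 1 :: 2 :: nil)%nat xh)
  (Hinv : let g1 := grad (phidiff phi 0 1) xh in
          let g2 := grad (phidiff phi 0 2) xh in
          fst g1 * snd g2 - snd g1 * fst g2 <> 0) :
  (exists d01 d12 d02,
      is_half_tangent (E D phi (0 :: 1 :: nil)%nat) xh d01 /\
      is_half_tangent (E D phi (1 :: 2 :: nil)%nat) xh d12 /\
      is_half_tangent (E D phi (0 :: 2 :: nil)%nat) xh d02) /\
  (forall d01 d12 d02 th0 th1,
      is_half_tangent (E D phi (0 :: 1 :: nil)%nat) xh d01 ->
      is_half_tangent (E D phi (1 :: 2 :: nil)%nat) xh d12 ->
      is_half_tangent (E D phi (0 :: 2 :: nil)%nat) xh d02 ->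
      ccw_angle d02 d01 th0 -> ccw_angle d02 d12 th1 ->
      forall k, (k < 3)%nat -> beta th0 th1 k = angle_formula phi xh k).
Proof.
  assert (Hcont : forall k, (k < 3)%nat -> cont2 (phi k))
    by (intros k Hk; exact (proj1 (Hsmooth k Hk 1%nat))).
  assert (Hdiff : forall k, (k < 3)%nat -> strictly_differentiable (phi k) xh (grad (phi k) xh))
    by (intros; apply smooth_strictly_differentiable; auto).
  assert (Hgrad := grad_phidiff phi xh Hdiff).
  assert (Htr : cross (vsub (grad (phi 1%nat) xh) (grad (phi 0%nat) xh))
                      (vsub (grad (phi 2%nat) xh) (grad (phi 0%nat) xh)) <> 0).
  { cbv zeta in Hinv; rewrite !Hgrad in Hinv by lia.
    intro E0; apply Hinv; unfold cross, vsub in *; simpl in *; lra. }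
  pose proof (half_tangent_E_pair D phi xh HDopen HxD Hcont Hdiff HxE Htr) as Ht.
  eassert (T01 : is_half_tangent (E D phi (0 :: 1 :: nil)%nat) xh _)
    by (apply (Ht 0 1 2)%nat; lia).
  eassert (T12 : is_half_tangent (E D phi (1 :: 2 :: nil)%nat) xh _)
    by (apply (Ht 1 2 0)%nat; lia).
  eassert (T02 : is_half_tangent (E D phi (0 :: 2 :: nil)%nat) xh _)
    by (apply (Ht 0 2 1)%nat; lia).
  split; [do 3 eexists; exact (conj T01 (conj T12 T02))|].
  intros d01 d12 d02 th0 th1 H01 H12 H02 A0 A1 k Hk.
  rewrite (half_tangent_unique _ _ _ _ H01 T01), (half_tangent_unique _ _ _ _ H12 T12),
    (half_tangent_unique _ _ _ _ H02 T02) in *.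
  destruct (beta_junction _ _ _ th0 th1 Htr A0 A1) as [B0 [B1 B2]].
  unfold angle_formula; cbv zeta.
  destruct k as [|[|[|k]]]; [| | |lia]; simpl Nat.modulo; rewrite !Hgrad by lia; assumption.
Qed.
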